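(* Let $k\ge 2$, $n\ge 1$, $x=\zeta_k$, and let $H\in\mathrm{BH}(kn+k,k)$ have the block form \[H=\begin{pmatrix} S & F_k\otimes j_n\\ F_k^{\ast}\otimes j_n^{\top} & A\end{pmatrix},\] where $S$ is a circulant matrix in $\mathrm{BH}(k,k)$ and $A$ is a $kn\times kn$ matrix. Let $R_1$ and $C_1$ be the sets of the first $k$ rows and first $k$ columns of $H$, respectively, and for some $0\le m\le k-1$ let $R_2$ and $C_2$ be the sets of the $n$ consecutive rows, respectively columns, of $H$ with indices $k+mn+1,\dots,k+mn+n$. Let $\omega\in\langle x\rangle\setminus\{1\}$. Then the matrix obtained from $H$ by multiplying every entry of the submatrix with rows $R_1$ and columns $C_2$ by $\omega$, and simultaneously every entry of the submatrix with rows $R_2$ and columns $C_1$ by $\overline{\omega}$ (all other entries unchanged), is again in $\mathrm{BH}(kn+k,k)$.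
   Context: $\zeta_k=e^{2\pi\sqrt{-1}/k}$ and $\langle\zeta_k\rangle$ is the group of $k$-th roots of unity. A complex Hadamard matrix of order $N$ is an $N\times N$ matrix with entries of modulus $1$ and $HH^{\ast}=NI_N$. $\mathrm{BH}(N,k)$ is the set of $N\times N$ complex Hadamard matrices with all entries in $\langle\zeta_k\rangle$. A circulant matrix $\mathrm{circ}(s_0,\dots,s_{k-1})$ has $(i,j)$ entry $s_{(j-i)\bmod k}$ ($0\le i,j\le k-1$). $F_k=[x^{(i-1)(j-1)}]_{1\le i,j\le k}$, $j_n$ is the all-ones row vector of length $n$, and $\otimes$ is the Kronecker product $A\otimes B=[a_{ij}B]$. *)

From mathcomp Require Import all_boot all_order all_algebra all_field.
From mathcomp Require Import mxtens.
Set Implicit Arguments. Unset Strict Implicit. Unset Printing Implicit Defensive.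
Import Order.TTheory GRing.Theory Num.Theory.
Local Open Scope ring_scope.

(* zeta_k = e^{2 pi i / k} in algC: k.-root (-1) is the k-th root of -1 with
   minimal nonnegative argument, i.e. e^{i pi / k}; its square is e^{2 pi i/k}. *)
Definition zeta (k : nat) : algC := (k.-root (-1)) ^+ 2.

Definition in_roots (k : nat) (a : algC) : Prop := exists e : nat, a = zeta k ^+ e.

Definition ctrmx (m n : nat) (M : 'M[algC]_(m, n)) : 'M[algC]_(n, m) :=
  (map_mx (fun z => z^*) M)^T.

Definition BH (N k : nat) (H : 'M[algC]_N) : Prop :=
  (forall i j, in_roots k (H i j)) /\ H *m ctrmx H = (N%:R : algC)%:M.

Definition circ (k : nat) (s : nat -> algC) : 'M[algC]_k :=
  \matrix_(i < k, j < k) s ((j + k - i) %% k)%N.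

Definition is_circulant (k : nat) (S : 'M[algC]_k) : Prop :=
  exists s : nat -> algC, S = circ k s.

(* F_k = [x^{(i-1)(j-1)}], 0-indexed *)
Definition Fmx (k : nat) (x : algC) : 'M[algC]_k := \matrix_(i < k, j < k) x ^+ (i * j).

Notation kron := tensmx.

Definition jrow (n : nat) : 'rV[algC]_n := const_mx 1.
Arguments BH N k H : clear implicits.

From mathcomp Require Import all_boot all_order all_algebra all_field mxtens.
From mathcomp Require Import ring zify.
Import Order.TTheory GRing.Theory Num.Theory.
Local Open Scope ring_scope.

(* Let x = zeta k and lambda_a = sum_l s_l x^(l a), the eigenvalue of the
   circulant S = circ(s) on the a-th column of F_k.  Orthogonality of the
   bottom row (a, t) of H to its first k rows, together with the invertibility
   of F_k, determines the block row sums of A: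
   sum_u conj(A_((a,t),(c,u))) = - lambda_a [a = c].
   After switching, two rows of the same kind carry the same weights, so their
   inner product is unchanged.  For a top row i against a bottom row of block a,
   the two surviving terms x^(i a) lambda_a and - x^(i a) lambda_a get the same
   weight and still cancel.  Two bottom rows from different blocks only differ
   from H on the first k columns, where their inner product is an off-diagonal
   entry of F_k^* F_k, hence 0. *)

Section RootsOfUnity.
Variable k : nat.
Hypothesis k_gt0 : (0 < k)%N.

Lemma zeta_expk : zeta k ^+ k = 1.
Proof. by rewrite /zeta -exprM mulnC exprM rootCK // expr2 mulN1r opprK. Qed.

Lemma zeta_mulC : zeta k * (zeta k)^* = 1.
Proof.
have : `|zeta k| ^+ k == 1 by rewrite -normrX zeta_expk normr1.
by rewrite pexpr_eq1 // => /eqP norm1; rewrite -normCK norm1 expr1n.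
Qed.

Lemma conj_zeta : (zeta k)^* = zeta k ^+ k.-1.
Proof.
have xk : zeta k ^+ k = zeta k * zeta k ^+ k.-1 by rewrite -exprS prednK.
by rewrite -[LHS]mul1r -zeta_expk xk mulrAC zeta_mulC mul1r.
Qed.

Lemma in_roots_mulC a : in_roots k a -> a * a^* = 1.
Proof. by move=> [e ->]; rewrite rmorphXn -exprMn zeta_mulC expr1n. Qed.

Lemma in_roots_conj a : in_roots k a -> in_roots k a^*.
Proof. by move=> [e ->]; exists (k.-1 * e)%N; rewrite exprM -conj_zeta rmorphXn. Qed.

End RootsOfUnity.

Lemma in_roots1 k : in_roots k 1.
Proof. by exists 0%N. Qed.

Lemma in_rootsM k a b : in_roots k a -> in_roots k b -> in_roots k (a * b).
Proof. by move=> [e ->] [e' ->]; exists (e + e')%N; rewrite exprD. Qed.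

Definition rowdot {m n : nat} (M : 'M[algC]_(m, n)) (p q : 'I_m) : algC :=
  \sum_j M p j * (M q j)^*.

Lemma rowdot_scalarP {m n : nat} (M : 'M[algC]_(m, n)) (c : algC) :
  M *m ctrmx M = c%:M <-> forall p q, rowdot M p q = c *+ (p == q).
Proof.
have dotE p q : (M *m ctrmx M) p q = rowdot M p q.
  by rewrite mxE; apply: eq_bigr => j _; rewrite !mxE.
split=> [MM p q | dotM]; first by rewrite -dotE MM mxE.
by apply/matrixP => p q; rewrite dotE dotM mxE.
Qed.

Lemma rowdotC {m n : nat} (M : 'M[algC]_(m, n)) p q : rowdot M q p = (rowdot M p q)^*.
Proof. by rewrite /rowdot rmorph_sum; apply: eq_bigr => j _; rewrite rmorphM /= conjCK mulrC. Qed.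

Lemma rowdot_scale {m n : nat} (M : 'M[algC]_(m, n)) (f : 'I_m -> 'I_n -> algC) p q :
  (forall j, f p j * (f q j)^* = 1) ->
  rowdot (\matrix_(i, j) (M i j * f i j)) p q = rowdot M p q.
Proof. by move=> fpq; apply: eq_bigr => j _; rewrite !mxE rmorphM mulrACA fpq mulr1. Qed.

Lemma sum_mxtens_index (V : nmodType) {k n : nat} (F : 'I_(k * n) -> V) :
  \sum_j F j = \sum_(b < k) \sum_(u < n) F (mxtens_index (b, u)).
Proof.
rewrite pair_big /= (reindex (@mxtens_index k n)) //=; first by apply: eq_bigr => -[].
by exists (@mxtens_unindex k n) => i _; rewrite (mxtens_indexK, mxtens_unindexK).
Qed.

Definition circ_eigval k (s : nat -> algC) (x : algC) (a : nat) : algC :=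
  \sum_(l < k) s l * x ^+ (l * a).

Lemma circ_eigvec k (s : nat -> algC) (x : algC) (i : 'I_k) (a : nat) : x ^+ k = 1 ->
  \sum_(j < k) circ k s i j * x ^+ (j * a) = x ^+ (i * a) * circ_eigval k s x a.
Proof.
move=> xk; have k_gt0 : (0 < k)%N by apply: leq_ltn_trans (ltn_ord i).
have i_le_k : (i <= k)%N by apply: ltnW.
pose shift (l : 'I_k) : 'I_k := Ordinal (ltn_pmod (l + i) k_gt0).
pose unshift (j : 'I_k) : 'I_k := Ordinal (ltn_pmod (j + k - i) k_gt0).
have shiftK l : ((shift l + k - i) %% k = l)%N.
  by rewrite /= -addnBA // modnDml -addnA subnKC // modnDr modn_small.
rewrite (reindex shift); last first.
  exists unshift => j _; apply: val_inj => /=; first exact: shiftK.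
  by rewrite modnDml subnK ?modnDr ?modn_small // (leq_trans i_le_k (leq_addl _ _)).
rewrite /circ_eigval mulr_sumr; apply: eq_bigr => l _.
by rewrite mxE shiftK exprM expr_mod // -exprM mulnDl exprD; ring.
Qed.

Section BorderedCirculant.
Set Implicit Arguments.
Unset Strict Implicit.
Variables (k n : nat) (s : nat -> algC) (A : 'M[algC]_(k * n)) (H : 'M[algC]_(k + k * n)).
Hypotheses (k_gt0 : (0 < k)%N) (n_gt0 : (0 < n)%N).

Local Notation x := (zeta k).
Local Notation lambda := (circ_eigval k s x).
Local Notation top i := (lshift (k * n) i).
Local Notation bot a t := (rshift k (mxtens_index (a, t))).

Hypothesis H_def : H =
  block_mx (circ k s) (castmx (muln1 k, erefl (k * n)%N) (kron (Fmx k x) (jrow n)))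
           (castmx (erefl (k * n)%N, muln1 k) (kron (ctrmx (Fmx k x)) (jrow n)^T)) A.
Hypothesis S_orth : forall i i', rowdot (circ k s) i i' = k%:R *+ (i == i').
Hypothesis H_orth : forall p q, rowdot H p q = (k + k * n)%:R *+ (p == q).

Lemma H_top_top i j : H (top i) (top j) = circ k s i j.
Proof. by rewrite H_def block_mxEul. Qed.

Lemma H_top_bot i b u : H (top i) (bot b u) = x ^+ (i * b).
Proof. by rewrite H_def block_mxEur castmxE !mxE cast_ord_id mxtens_indexK /= divn1 mulr1. Qed.

Lemma H_bot_top a t j : H (bot a t) (top j) = (x ^+ (j * a))^*.
Proof. by rewrite H_def block_mxEdl castmxE !mxE cast_ord_id mxtens_indexK /= divn1 mulr1. Qed.

Lemma H_bot_bot a t b u : H (bot a t) (bot b u) = A (mxtens_index (a, t)) (mxtens_index (b, u)).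
Proof. by rewrite H_def block_mxEdr. Qed.

Lemma eq_bot (a a' : 'I_k) (t t' : 'I_n) : (bot a t == bot a' t') = ((a, t) == (a', t')).
Proof. by rewrite eq_rshift (can_eq (@mxtens_indexK _ _)). Qed.

(* The orthogonality of the first k rows of H, minus that of the rows of S,
   leaves n copies of the Fourier Gram matrix; this avoids having to know
   that zeta k is a primitive root. *)
Lemma fourier_orth (i i' : 'I_k) :
  \sum_(b < k) x ^+ (i * b) * (x ^+ (i' * b))^* = k%:R *+ (i == i').
Proof.
have := H_orth (top i) (top i').
rewrite /rowdot big_split_ord sum_mxtens_index /= eq_lshift.
under eq_bigr do rewrite !H_top_top.
rewrite -/(rowdot _ i i') S_orth natrD natrM mulr_natr mulrnDl => /addrI.
under eq_bigr do under eq_bigr do rewrite !H_top_bot.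
under eq_bigr do rewrite sumr_const card_ord.
rewrite sumrMnl [RHS]mulrnAC => /eqP; rewrite -subr_eq0 -mulrnBl mulrn_eq0 eqn0Ngt n_gt0.
by rewrite subr_eq0 => /eqP.
Qed.

Lemma fourier_inj (v : 'I_k -> algC) :
  (forall i : 'I_k, \sum_(b < k) x ^+ (i * b) * v b = 0) -> forall c, v c = 0.
Proof.
move=> Fv0 c; have k_neq0 : k%:R != 0 :> algC by rewrite pnatr_eq0 -lt0n.
apply: (mulIf k_neq0); rewrite mul0r.
have <- : \sum_(i < k) (x ^+ (i * c))^* * \sum_(b < k) x ^+ (i * b) * v b = 0.
  by apply: big1 => i _; rewrite Fv0 mulr0.
have inner (b : 'I_k) :
    \sum_(i < k) (x ^+ (i * c))^* * (x ^+ (i * b) * v b) = v b * k%:R *+ (b == c).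
  rewrite -mulrnAr -fourier_orth mulr_sumr.
  by apply: eq_bigr => i _; rewrite !(mulnC i); ring.
under eq_bigr do rewrite mulr_sumr.
rewrite exchange_big (bigD1 c) //= inner eqxx mulr1n big1 ?addr0 // => b ne_bc.
by rewrite inner (negbTE ne_bc).
Qed.

(* Orthogonality of row (a, t) to the top rows says that F_k maps [v] below to
   0, and F_k is invertible. *)
Lemma A_block_rowsum (a c : 'I_k) (t : 'I_n) :
  \sum_(u < n) (A (mxtens_index (a, t)) (mxtens_index (c, u)))^* = - lambda a *+ (a == c).
Proof.
pose v b := lambda a *+ (a == b) +
  \sum_(u < n) (A (mxtens_index (a, t)) (mxtens_index (b, u)))^*.
suff v0 : forall c, v c = 0 by apply/eqP; rewrite mulNrn -addr_eq0 addrC; apply/eqP/v0.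
apply: fourier_inj => i.
transitivity (rowdot H (top i) (bot a t)); last by rewrite H_orth eq_lrshift.
rewrite /rowdot big_split_ord sum_mxtens_index /=.
under [in RHS]eq_bigr do rewrite H_top_top H_bot_top conjCK.
rewrite circ_eigvec ?zeta_expk //.
under eq_bigr do rewrite mulrDr.
rewrite big_split /= (bigD1 a) //= eqxx mulr1n big1 ?add0r => [|b ne_ba]; last first.
  by rewrite eq_sym (negbTE ne_ba) mulr0n mulr0.
congr (_ + _); first exact: addr0.
apply: eq_bigr => b _.
by rewrite mulr_sumr; apply: eq_bigr => u _; rewrite H_top_bot H_bot_bot.
Qed.

Variables (m : nat) (w : algC).
Hypothesis w_roots : in_roots k w.

Definition in_stripe (i : nat) : bool := (k + m * n <= i < k + m * n + n)%N.

Definition switch_weight (i j : nat) : algC :=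
  if (i < k)%N && in_stripe j then w
  else if in_stripe i && (j < k)%N then w^* else 1.

Local Notation H' := (\matrix_(i, j) (H i j * switch_weight i j)).

Lemma in_stripe_top (i : 'I_k) : in_stripe (top i) = false.
Proof. by rewrite /in_stripe /=; have := ltn_ord i; lia. Qed.

Lemma in_stripe_bot (a : 'I_k) (t : 'I_n) : in_stripe (bot a t) = (a == m :> nat).
Proof.
rewrite /in_stripe /=; have t_lt_n := ltn_ord t.
apply/idP/eqP => [/andP [] | ->]; [nia | lia].
Qed.

Lemma bot_ltn (a : 'I_k) (t : 'I_n) : (bot a t < k)%N = false.
Proof. by rewrite /=; lia. Qed.

Lemma switch_weight_top_top (i j : 'I_k) : switch_weight (top i) (top j) = 1.
Proof. by rewrite /switch_weight !in_stripe_top andbF. Qed.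

Lemma switch_weight_top_bot (i b : 'I_k) (u : 'I_n) :
  switch_weight (top i) (bot b u) = if b == m :> nat then w else 1.
Proof. by rewrite /switch_weight in_stripe_bot in_stripe_top /= ltn_ord; case: ifP. Qed.

Lemma switch_weight_bot_top (a j : 'I_k) (t : 'I_n) :
  switch_weight (bot a t) (top j) = if a == m :> nat then w^* else 1.
Proof. by rewrite /switch_weight bot_ltn in_stripe_bot /= ltn_ord andbT. Qed.

Lemma switch_weight_bot_bot (a : 'I_k) (t : 'I_n) (j : 'I_(k * n)) :
  switch_weight (bot a t) (rshift k j) = 1.
Proof. by rewrite /switch_weight bot_ltn /=; case: ifP => //; lia. Qed.

Lemma switch_weight_in_roots i j : in_roots k (switch_weight i j).
Proof.
rewrite /switch_weight; case: ifP => _; first exact: w_roots.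
by case: ifP => _; [apply: in_roots_conj | apply: in_roots1].
Qed.

Lemma rowdot_switch_top_bot (i a : 'I_k) (t : 'I_n) : rowdot H' (top i) (bot a t) = 0.
Proof.
set d := if a == m :> nat then w else 1.
have conj_d : (if a == m :> nat then w^* else 1)^* = d.
  by rewrite /d; case: ifP; rewrite ?conjCK ?conjC1.
rewrite /rowdot big_split_ord sum_mxtens_index /=.
under eq_bigr do rewrite !mxE H_top_top H_bot_top switch_weight_top_top
  switch_weight_bot_top mulr1 rmorphM /= conjCK conj_d mulrA.
rewrite -mulr_suml circ_eigvec ?zeta_expk //.
under eq_bigr do under eq_bigr do rewrite !mxE H_top_bot H_bot_bot
  switch_weight_top_bot switch_weight_bot_bot mulr1.
under eq_bigr do rewrite -mulr_sumr A_block_rowsum.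
rewrite (bigD1 a) //= eqxx mulr1n big1 ?addr0 => [|b ne_ba]; last first.
  by rewrite eq_sym in ne_ba; rewrite (negbTE ne_ba) mulr0n mulr0.
rewrite -/d; ring.
Qed.

Lemma rowdot_switch_bot_bot (a a' : 'I_k) (t t' : 'I_n) :
  a == m :> nat -> a' != m :> nat -> rowdot H' (bot a t) (bot a' t') = 0.
Proof.
move=> am a'm; have ne_aa' : a != a' by apply: contraNneq a'm => <-.
have fourier0 : \sum_(j < k) (x ^+ (j * a))^* * x ^+ (j * a') = 0.
  transitivity (\sum_(b < k) x ^+ (a' * b) * (x ^+ (a * b))^*).
    by apply: eq_bigr => j _; rewrite mulrC !(mulnC j).
  by rewrite fourier_orth eq_sym (negbTE ne_aa').
transitivity (rowdot H (bot a t) (bot a' t')); last first.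
  by rewrite H_orth eq_bot xpair_eqE (negbTE ne_aa').
rewrite /rowdot !big_split_ord /= !sum_mxtens_index; congr (_ + _).
  under eq_bigr do rewrite !mxE !H_bot_top !switch_weight_bot_top am (negbTE a'm) /=
    mulr1 conjCK mulrAC.
  rewrite -mulr_suml fourier0 mul0r.
  by under eq_bigr do rewrite !H_bot_top conjCK; rewrite fourier0.
by apply: eq_bigr => b _; apply: eq_bigr => u _; rewrite !mxE !switch_weight_bot_bot !mulr1.
Qed.

Lemma rowdot_switch p q : rowdot H' p q = (k + k * n)%:R *+ (p == q).
Proof.
have same_class (p' q' : 'I_(k + k * n)) :
    (p' < k)%N = (q' < k)%N -> in_stripe p' = in_stripe q' ->
    rowdot H' p' q' = (k + k * n)%:R *+ (p' == q').
  move=> eq_top eq_stripe; rewrite -H_orth; apply: rowdot_scale => j.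
  have -> : switch_weight p' j = switch_weight q' j.
    by rewrite /switch_weight eq_top eq_stripe.
  exact: in_roots_mulC k_gt0 _ (switch_weight_in_roots q' j).
case: (split_ordP p) => [i ->|r ->]; case: (split_ordP q) => [i' ->|r' ->].
- by apply: same_class; rewrite ?in_stripe_top /= ?ltn_ord.
- by case: (mxtens_indexP r') => a t; rewrite rowdot_switch_top_bot eq_lrshift.
- by case: (mxtens_indexP r) => a t; rewrite rowdotC rowdot_switch_top_bot conjC0 eq_rlshift.
case: (mxtens_indexP r) => a t; case: (mxtens_indexP r') => a' t'.
have [eq_stripe|ne_stripe] := eqVneq (a == m :> nat) (a' == m :> nat).
  by apply: same_class; rewrite ?bot_ltn ?in_stripe_bot.
have ne_aa' : a != a' by apply: contraNneq ne_stripe => ->.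
rewrite eq_bot xpair_eqE (negbTE ne_aa') mulr0n.
case/boolP: (a == m :> nat) ne_stripe => am /= a'm.
  by rewrite rowdot_switch_bot_bot.
rewrite rowdotC rowdot_switch_bot_bot ?conjC0 //.
by move: a'm; rewrite eq_sym eqbF_neg negbK.
Qed.

End BorderedCirculant.

Theorem corollary5p4 (k n : nat) (hk : (2 <= k)%N) (hn : (1 <= n)%N)
  (S : 'M[algC]_k) (A : 'M[algC]_(k * n)) (H : 'M[algC]_(k + k * n))
  (hS : is_circulant S) (hSBH : BH k k S)
  (hH : H = block_mx S (castmx (muln1 k, erefl (k * n)%N) (kron (Fmx k (zeta k)) (jrow n)))
                       (castmx (erefl (k * n)%N, muln1 k) (kron (ctrmx (Fmx k (zeta k))) (jrow n)^T)) A)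
  (hHBH : BH (k + k * n) k H)
  (m : nat) (hm : (m < k)%N)
  (w : algC) (hw : in_roots k w) (hw1 : w != 1) :
  BH (k + k * n) k
    (\matrix_(i, j)
       (H i j *
        (if ((i < k)%N && (k + m * n <= j < k + m * n + n)%N) then w
         else if ((k + m * n <= i < k + m * n + n)%N && (j < k)%N) then w^*
         else 1))).
Proof.
have k_gt0 : (0 < k)%N by apply: leq_trans hk.
have [H_roots /rowdot_scalarP H_orth] := hHBH.
have [_ /rowdot_scalarP S_orth] := hSBH.
case: hS => s S_circ; rewrite {}S_circ in hH S_orth.
split=> [i j|].
  by rewrite mxE; apply: in_rootsM; [exact: H_roots | exact: switch_weight_in_roots].
apply/rowdot_scalarP; exact (rowdot_switch k_gt0 hn hH S_orth H_orth m hw).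
Qed.
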